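(* Let $q$ be a prime power with $q\equiv 1 \pmod 3$, let $\delta\in\mathbb{F}_q$ be a cubic nonresidue, and let $\mathbb{F}_q(\delta^{1/3})$ be the cubic extension with $\mathbb{F}_q$-basis $\{1,\delta^{1/3},\delta^{2/3}\}$; write $\alpha=\alpha_1+\alpha_2\delta^{1/3}+\alpha_3\delta^{2/3}$ with $\alpha_i\in\mathbb{F}_q$. Let $\mathbb{H}_q=\{(\alpha,\beta)\in \mathbb{F}_q(\delta^{1/3})^2 : \alpha_2\beta_3-\alpha_3\beta_2\neq 0\}$ with the action of $\mathrm{GL}_3(\mathbb{F}_q)$ given by \[ \begin{bmatrix} a & b & c\\ d & e & f\\ r & s & t \end{bmatrix} (\alpha,\beta) = \left(\frac{a\alpha+b\beta+c}{r\alpha+s\beta+t}, \frac{d\alpha+e\beta+f}{r\alpha+s\beta+t} \right). \] Let $H$ be the subgroup \[H=\left\{\begin{bmatrix} x & y & 0\\ w & z & 0\\ 0 & 0 & t\end{bmatrix}\in\mathrm{GL}_3(\mathbb{F}_q)\right\}\cong \mathrm{GL}_2(\mathbb{F}_q)\times\mathbb{F}_q^\times\] (the centralizer in $\mathrm{GL}_3(\mathbb{F}_q)$ of $\mathrm{diag}(a,a,b)$ with $a\neq b$). Then the set \[\{(u+\delta^{1/3},\,v+\delta^{2/3}) : u,v\in\mathbb{F}_q\}\] is a fundamental domain for the action of $H$ on $\mathbb{H}_q$.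
   Context: A fundamental domain for the action of a subgroup $H$ on $\mathbb{H}_q$ is a subset of $\mathbb{H}_q$ containing exactly one element of each $H$-orbit. A cubic nonresidue is an element of $\mathbb{F}_q^\times$ that is not a cube in $\mathbb{F}_q$. *)

From HB Require Import structures.
From mathcomp Require Import all_boot all_order all_algebra all_field.
Set Implicit Arguments. Unset Strict Implicit. Unset Printing Implicit Defensive.
Import GRing.Theory.
Local Open Scope ring_scope.

Definition i0 : 'I_3 := @Ordinal 3 0 isT.
Definition i1 : 'I_3 := @Ordinal 3 1 isT.
Definition i2 : 'I_3 := @Ordinal 3 2 isT.

(* The F-basis {1, c, c^2} of L (c plays the role of delta^(1/3)). *)
Definition cbasis (F : fieldType) (L : fieldExtType F) (c : L) : 3.-tuple L :=
  [tuple 1; c; c ^+ 2].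

Definition ccoord (F : fieldType) (L : fieldExtType F) (c : L) (i : 'I_3) (a : L) : F :=
  coord (cbasis c) i a.

Definition inHq (F : fieldType) (L : fieldExtType F) (c : L) (p : L * L) : Prop :=
  ccoord c i1 p.1 * ccoord c i2 p.2 - ccoord c i2 p.1 * ccoord c i1 p.2 != 0.

Definition gact (F : fieldType) (L : fieldExtType F) (M : 'M[F]_3) (p : L * L) : L * L :=
  let den := (M i2 i0)%:A * p.1 + (M i2 i1)%:A * p.2 + (M i2 i2)%:A in
  (((M i0 i0)%:A * p.1 + (M i0 i1)%:A * p.2 + (M i0 i2)%:A) / den,
   ((M i1 i0)%:A * p.1 + (M i1 i1)%:A * p.2 + (M i1 i2)%:A) / den).

Definition inH (F : fieldType) (M : 'M[F]_3) : Prop :=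
  M \in unitmx /\ M i0 i2 = 0 /\ M i1 i2 = 0 /\ M i2 i0 = 0 /\ M i2 i1 = 0.

Definition fundamental_domain (F : fieldType) (L : fieldExtType F) (c : L)
    (D : L * L -> Prop) : Prop :=
  (forall d, D d -> inHq c d) /\
  (forall p, inHq c p ->
     exists! d, D d /\ exists M : 'M[F]_3, inH M /\ gact M p = d).

(** Only the fact that [1, c, c^2] is an [F]-basis of [L] matters.  An element [M] of [H] acts on
    [H_q] as the [F]-linear map [A = t^-1 [x y; w z]] on the pair
    [(alpha, beta)], so it multiplies the matrix of [c]- and [c^2]-coordinates
    [P = [alpha_2 alpha_3; beta_2 beta_3]] on the left by [A]; conversely every
    [A] in [GL_2(F)] comes from [H].  The condition defining [H_q] says that
    [P] is invertible, and the proposed domain is exactly [P = 1], so the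
    orbit of a point meets it once, at [A = P^-1]. *)

From HB Require Import structures.
From mathcomp Require Import all_boot all_order all_algebra all_field.
Set Implicit Arguments. Unset Strict Implicit. Unset Printing Implicit Defensive.
Import GRing.Theory.
Local Open Scope ring_scope.

Lemma det_mx2 (R : comNzRingType) (A : 'M[R]_2) :
  \det A = A 0 0 * A 1 1 - A 0 1 * A 1 0.
Proof.
rewrite (expand_det_row _ 0) !big_ord_recl big_ord0 /cofactor !det_mx11 !mxE /=.
rewrite !add0n expr0 expr1 mul1r mulN1r mulrN addr0.
have -> : lift 0 0 = 1 :> 'I_2 by exact: val_inj.
by have -> : lift 1 0 = 0 :> 'I_2 by exact: val_inj.
Qed.

Lemma ord2_cases (i : 'I_2) : i = 0 \/ i = 1.
Proof. by case: i => [[|[|]]] // ?; [left | right]; apply: val_inj. Qed.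

Lemma i0_lshift : i0 = lshift 1 (0 : 'I_2). Proof. exact: val_inj. Qed.
Lemma i1_lshift : i1 = lshift 1 (1 : 'I_2). Proof. exact: val_inj. Qed.
Lemma i2_rshift : i2 = rshift 2 (0 : 'I_1). Proof. exact: val_inj. Qed.
Lemma lift_i0_0 : lift i0 (0 : 'I_2) = i1. Proof. exact: val_inj. Qed.
Lemma lift_i0_1 : lift i0 (1 : 'I_2) = i2. Proof. exact: val_inj. Qed.

Definition lact (F : fieldType) (V : lmodType F) (A : 'M[F]_2) (p : V * V) :=
  (A 0 0 *: p.1 + A 0 1 *: p.2, A 1 0 *: p.1 + A 1 1 *: p.2).

Definition slice (F : fieldType) (L : fieldExtType F) (c : L) (d : L * L) :=
  exists u v : F, d = (u%:A + c, v%:A + c ^+ 2).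

Definition cmx (F : fieldType) (L : fieldExtType F) (c : L) (p : L * L) :=
  \matrix_(i < 2, j < 2) ccoord c (lift i0 j) (if i == 0 then p.1 else p.2).

Section Coordinates.

Variables (F : fieldType) (L : fieldExtType F) (c : L).

Lemma cmx_lact (A : 'M[F]_2) (p : L * L) : cmx c (lact A p) = A *m cmx c p.
Proof.
apply/matrixP => i j; rewrite !mxE !big_ord_recl big_ord0 !mxE addr0 /ccoord.
have -> : lift ord0 ord0 = 1 :> 'I_2 by exact: val_inj.
by case: (ord2_cases i) => ->; rewrite linearD !linearZ.
Qed.

Lemma inHq_unitmx (p : L * L) : inHq c p <-> cmx c p \in unitmx.
Proof. by rewrite unitmxE det_mx2 unitfE !mxE /= lift_i0_0 lift_i0_1. Qed.

Lemma sum_cbasis (k : 'I_3 -> F) :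
  \sum_i k i *: (cbasis c)`_i = (k i0)%:A + k i1 *: c + k i2 *: c ^+ 2.
Proof.
rewrite !big_ord_recl big_ord0 addr0 addrA.
have -> : lift ord0 (lift ord0 ord0) = i2 :> 'I_3 by exact: val_inj.
have -> : lift ord0 ord0 = i1 :> 'I_3 by exact: val_inj.
by have -> : ord0 = i0 :> 'I_3 by exact: val_inj.
Qed.

Hypothesis c_basis : basis_of fullv (cbasis c).

Lemma ccoord_expansion (a : L) :
  a = (ccoord c i0 a)%:A + ccoord c i1 a *: c + ccoord c i2 a *: c ^+ 2.
Proof. by rewrite {1}(coord_basis c_basis (memvf a)) sum_cbasis. Qed.

Lemma ccoord_comb (i : 'I_3) (k0 k1 k2 : F) :
  ccoord c i (k0%:A + k1 *: c + k2 *: c ^+ 2) = [:: k0; k1; k2]`_i.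
Proof.
rewrite -(sum_cbasis (fun j => [:: k0; k1; k2]`_j)).
exact: coord_sum_free (basis_free c_basis).
Qed.

Lemma sliceP (d : L * L) : slice c d <-> cmx c d = 1%:M.
Proof.
split.
  move=> [u [v ->]]; apply/matrixP => i j.
  have -> : u%:A + c = u%:A + 1 *: c + 0 *: c ^+ 2.
    by rewrite scale1r scale0r addr0.
  have -> : v%:A + c ^+ 2 = v%:A + 0 *: c + 1 *: c ^+ 2.
    by rewrite scale1r scale0r addr0.
  rewrite !mxE; case: (ord2_cases i) (ord2_cases j) => -> [] ->;
    by rewrite ?lift_i0_0 ?lift_i0_1 ccoord_comb.
move/matrixP=> d1.
have e i j : ccoord c (lift i0 j) (if i == 0 then d.1 else d.2) = (i == j)%:R.
  by have := d1 i j; rewrite !mxE.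
exists (ccoord c i0 d.1), (ccoord c i0 d.2).
move: (e 0 0) (e 0 1) (e 1 0) (e 1 1); rewrite /= lift_i0_0 lift_i0_1.
case: d {d1 e} => a b /= a1 a2 b1 b2.
rewrite {1}[a]ccoord_expansion {1}[b]ccoord_expansion a1 a2 b1 b2.
by rewrite !scale1r !scale0r !addr0.
Qed.

End Coordinates.

Lemma gact_inH (F : fieldType) (L : fieldExtType F) (M : 'M[F]_3) (p : L * L) :
  inH M -> gact M p = lact ((M i2 i2)^-1 *: ulsubmx (M : 'M_(2 + 1))) p.
Proof.
case=> _ [M02 [M12 [M20 M21]]].
rewrite /gact /lact !mxE -i0_lshift -i1_lshift M02 M12 M20 M21.
rewrite !scale0r !mul0r !add0r !addr0 !mulr_algl -in_algE -fmorphV !mulr_algr.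
by rewrite !scalerDr !scalerA.
Qed.

Definition mxH (F : fieldType) (A : 'M[F]_2) : 'M[F]_(2 + 1) :=
  block_mx A 0 0 1%:M.

Lemma det_mxH (F : fieldType) (A : 'M[F]_2) : \det (mxH A) = \det A.
Proof. by rewrite -[RHS]mulr1 -(det1 F 1) -(det_ublock A (0 : 'M_(2, 1))). Qed.

Lemma inH_mxH (F : fieldType) (A : 'M[F]_2) : A \in unitmx -> inH (mxH A).
Proof.
move=> Au; split; first by rewrite unitmxE det_mxH -unitmxE.
rewrite /mxH i0_lshift i1_lshift i2_rshift.
by rewrite !(block_mxEur A) !(block_mxEdl A) !mxE.
Qed.

Lemma gact_mxH (F : fieldType) (L : fieldExtType F) (A : 'M[F]_2) (p : L * L) :
  A \in unitmx -> gact (mxH A) p = lact A p.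
Proof.
move=> Au; rewrite gact_inH; last exact: inH_mxH.
by rewrite /mxH block_mxKul i2_rshift (block_mxEdr A) mxE invr1 scale1r.
Qed.

Theorem proposition4p1 (q : nat) (F : finFieldType) (L : fieldExtType F)
    (delta : F) (c : L) :
  #|F| = q -> (q %% 3 = 1)%N ->
  delta != 0 -> ~ (exists x : F, x ^+ 3 = delta) ->
  c ^+ 3 = delta%:A -> basis_of fullv (cbasis c) ->
  fundamental_domain c
    (fun d : L * L => exists u v : F, d = (u%:A + c, v%:A + c ^+ 2)).
Proof.
move=> _ _ _ _ _ c_basis.
split=> [d /(sliceP c_basis) d1 | p /inHq_unitmx Pu].
  by apply/inHq_unitmx; rewrite d1 unitmx1.
have Pinv_u : invmx (cmx c p) \in unitmx by rewrite unitmx_inv.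
exists (lact (invmx (cmx c p)) p); split.
  split; first by apply/(sliceP c_basis); rewrite cmx_lact mulVmx.
  by exists (mxH (invmx (cmx c p))); split; [apply: inH_mxH | apply: gact_mxH].
move=> d [d_slice [M [HM Mp_d]]].
move: d_slice; rewrite -Mp_d gact_inH // => /(sliceP c_basis).
rewrite cmx_lact => A_Pinv; congr lact.
by rewrite -[LHS]mul1mx -A_Pinv -mulmxA mulmxV ?mulmx1.
Qed.
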